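(* Assume (SM), (LIP), (POT) and consider the algorithm AILFEM of the context with arbitrary $\lambda_{\mathrm{lin}},\lambda_{\mathrm{alg}}>0$. Define $\tau:=M+3M(L[3M]/\alpha)^{1/2}\ (\ge4M)$. Let $k\in\mathbb{N}_0$ with $0\le k<\underline{k}[\ell]$ and $|||u_\ell^{k,\underline{i}}|||\le\tau$, and let $i_{\min}\in\mathbb{N}$ satisfy $q_{\mathrm{alg}}^{i_{\min}}\le1/3$. Then, for $0<\delta<\min\{1/L[5\tau],\,2\alpha/L[2\tau]^2\}$, it holds that $$0\le\mathcal{E}(u_\ell^{k+1,\underline{i}})-\mathcal{E}(u_\ell^\star)\le q_{\mathcal{E}}[\delta,\tau]^2\,[\mathcal{E}(u_\ell^{k,\underline{i}})-\mathcal{E}(u_\ell^\star)]$$ with the contraction constant $$0\le q_{\mathcal{E}}[\delta,\tau]^2:=1-\Big(\frac1\delta-L[5\tau]\Big)\frac{(1-q_{\mathrm{alg}}^{i_{\min}})^2\delta^2\alpha^2}{L[2\tau]}<1,$$ and $q_{\mathcal{E}}[\delta,\tau]\to1$ as $\delta\to0$. In particular, $$(1-q_{\mathcal{E}}[\delta,\tau]^2)[\mathcal{E}(u_\ell^{k,\underline{i}})-\mathcal{E}(u_\ell^\star)]\le\mathcal{E}(u_\ell^{k,\underline{i}})-\mathcal{E}(u_\ell^{k+1,\underline{i}})\le\mathcal{E}(u_\ell^{k,\underline{i}})-\mathcal{E}(u_\ell^\star).$$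
   Context: Abstract setting. Let $\mathcal{X}$ be a real Hilbert space with scalar product $\langle\!\langle\cdot,\cdot\rangle\!\rangle$ and norm $|||\cdot|||$, with dual space $\mathcal{X}'$ (norm $\|\cdot\|_{\mathcal{X}'}$, duality bracket $\langle\cdot,\cdot\rangle$). Let $\mathcal{A}:\mathcal{X}\to\mathcal{X}'$ be a nonlinear operator and $F\in\mathcal{X}'$ with $\mathcal{A}0\neq F$. Conditions: (SM) there is $\alpha>0$ with $\alpha|||v-w|||^2\le\langle\mathcal{A}v-\mathcal{A}w,v-w\rangle$ for all $v,w\in\mathcal{X}$; (LIP) for every $\vartheta>0$ there is $L[\vartheta]>0$ with $\langle\mathcal{A}v-\mathcal{A}w,\varphi\rangle\le L[\vartheta]\,|||v-w|||\,|||\varphi|||$ for all $v,w,\varphi\in\mathcal{X}$ with $\max\{|||v|||,|||v-w|||\}\le\vartheta$; (POT) there is a Gâteaux differentiable $\mathcal{P}:\mathcal{X}\to\mathbb{R}$ with $\langle\mathcal{A}w,v\rangle=\lim_{t\to0}(\mathcal{P}(w+tv)-\mathcal{P}(w))/t$ for all $v,w$. The energy is $\mathcal{E}(v):=\mathcal{P}(v)-F(v)$. For every closed subspace $\mathcal{Y}\subseteq\mathcal{X}$ there is a unique $u^\star_{\mathcal{Y}}\in\mathcal{Y}$ with $\langle\mathcal{A}u^\star_{\mathcal{Y}},v\rangle=F(v)$ for all $v\in\mathcal{Y}$; $u^\star:=u^\star_{\mathcal{X}}$. Put $M:=\|F-\mathcal{A}0\|_{\mathcal{X}'}/\alpha$.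 Meshes. $\mathcal{T}_0$ is an initial conforming simplicial triangulation; $\mathtt{refine}(\mathcal{T}_H,\mathcal{M}_H)$ is the coarsest newest-vertex-bisection (NVB) refinement of $\mathcal{T}_H$ in which all elements of $\mathcal{M}_H\subseteq\mathcal{T}_H$ are refined; $\mathbb{T}(\mathcal{T}_H)$ is the set of meshes obtained from $\mathcal{T}_H$ by finitely many NVB steps, $\mathbb{T}:=\mathbb{T}(\mathcal{T}_0)$. Each $\mathcal{T}_H\in\mathbb{T}$ is associated with a finite-dimensional subspace $\mathcal{X}_H\subset\mathcal{X}$, nested: $\mathcal{X}_H\subseteq\mathcal{X}_h$ if $\mathcal{T}_h\in\mathbb{T}(\mathcal{T}_H)$. Write $u_H^\star:=u^\star_{\mathcal{X}_H}$. Zarantonello map: for $\delta>0$, $w_H\in\mathcal{X}_H$, $\Phi_H(\delta;w_H)\in\mathcal{X}_H$ is the unique solution of $\langle\!\langle\Phi_H(\delta;w_H),v_H\rangle\!\rangle=\langle\!\langle w_H,v_H\rangle\!\rangle+\delta[F(v_H)-\langle\mathcal{A}w_H,v_H\rangle]$ for all $v_H\in\mathcal{X}_H$. Algebraic solver: there is $0<q_{\mathrm{alg}}<1$ and for each $\mathcal{T}_H$ a map $\Psi_H:\mathcal{X}'\times\mathcal{X}_H\to\mathcal{X}_H$ such that for every $\varphi\in\mathcal{X}'$, with $w_H^\star\in\mathcal{X}_H$ solving $\langle\!\langle w_H^\star,v_H\rangle\!\rangle=\varphi(v_H)$ for all $v_H\in\mathcal{X}_H$, one has $|||w_H^\star-\Psi_H(\varphi;w_H)|||\le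 q_{\mathrm{alg}}|||w_H^\star-w_H|||$ for all $w_H\in\mathcal{X}_H$. One writes $\Psi_H(w_H^\star;\cdot)$ for $\Psi_H(\varphi;\cdot)$. Estimator: for $\mathcal{T}_H\in\mathbb{T}$, $T\in\mathcal{T}_H$, $v_H\in\mathcal{X}_H$ a number $\eta_H(T,v_H)\ge0$ is given; $\eta_H(\mathcal{U},v_H):=(\sum_{T\in\mathcal{U}}\eta_H(T,v_H)^2)^{1/2}$ for $\mathcal{U}\subseteq\mathcal{T}_H$ and $\eta_H(v_H):=\eta_H(\mathcal{T}_H,v_H)$. Index $\ell$ refers to $\mathcal{T}_\ell$, $\mathcal{X}_\ell$, $\Phi_\ell$, $\Psi_\ell$, $\eta_\ell$, $u_\ell^\star$. Algorithm AILFEM. Input: $\mathcal{T}_0$, $0<\theta\le1$, $C_{\mathrm{mark}}\ge1$, $\lambda_{\mathrm{lin}},\lambda_{\mathrm{alg}}>0$, $i_{\min}\in\mathbb{N}$, $\delta>0$, $u_0^{0,0}\in\mathcal{X}_0$ with $|||u_0^{0,0}|||\le2M$; set $u_0^{0,\star}:=u_0^{0,\underline{i}}:=u_0^{0,0}$. For $\ell=0,1,2,\dots$: (I) For $k=1,2,\dots$: set $u_\ell^{k,0}:=u_\ell^{k-1,\underline{i}}$ and $u_\ell^{k,\star}:=\Phi_\ell(\delta;u_\ell^{k-1,\underline{i}})$ (not computed). For $i=1,2,\dots$: compute $u_\ell^{k,i}:=\Psi_\ell(u_\ell^{k,\star};u_\ell^{k,i-1})$ and $\eta_\ell(u_\ell^{k,i})$;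 terminate the $i$-loop with $\underline{i}[\ell,k]:=i$ if $|||u_\ell^{k,i-1}-u_\ell^{k,i}|||\le\lambda_{\mathrm{alg}}[\lambda_{\mathrm{lin}}\eta_\ell(u_\ell^{k,i})+|||u_\ell^{k,i}-u_\ell^{k,0}|||]$ and $i_{\min}\le i$. Write $u_\ell^{k,\underline{i}}:=u_\ell^{k,\underline{i}[\ell,k]}$. Terminate the $k$-loop with $\underline{k}[\ell]:=k$ if $\mathcal{E}(u_\ell^{k,0})-\mathcal{E}(u_\ell^{k,\underline{i}})\le\lambda_{\mathrm{lin}}^2\eta_\ell(u_\ell^{k,\underline{i}})^2$ and $|||u_\ell^{k,\underline{i}}|||\le2M$. (II) Choose $\mathcal{M}_\ell\subseteq\mathcal{T}_\ell$ with $\theta\,\eta_\ell(u_\ell^{\underline{k},\underline{i}})^2\le\eta_\ell(\mathcal{M}_\ell,u_\ell^{\underline{k},\underline{i}})^2$ and $\#\mathcal{M}_\ell\le C_{\mathrm{mark}}\min\{\#\mathcal{U}:\mathcal{U}\subseteq\mathcal{T}_\ell,\ \theta\eta_\ell(u_\ell^{\underline{k},\underline{i}})^2\le\eta_\ell(\mathcal{U},u_\ell^{\underline{k},\underline{i}})^2\}$. (III) $\mathcal{T}_{\ell+1}:=\mathtt{refine}(\mathcal{T}_\ell,\mathcal{M}_\ell)$ and $u_{\ell+1}^{0,0}:=u_{\ell+1}^{0,\underline{i}}:=u_{\ell+1}^{0,\star}:=u_\ell^{\underline{k},\underline{i}}$. Index set: $\mathcal{Q}:=\{(\ell,k,i)\in\mathbb{N}_0^3: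 u_\ell^{k,i}\text{ is used in the algorithm}\}$; $\underline{k}[\ell]:=\sup\{k\in\mathbb{N}:(\ell,k,0)\in\mathcal{Q}\}$, $\underline{i}[\ell,k]:=\sup\{i\in\mathbb{N}:(\ell,k,i)\in\mathcal{Q}\}$. *)

From HB Require Import structures.
From mathcomp Require Import all_boot all_order all_algebra.
From mathcomp Require Import all_classical all_reals all_analysis.
Set Implicit Arguments. Unset Strict Implicit. Unset Printing Implicit Defensive.
Import Order.TTheory GRing.Theory Num.Theory.
Import numFieldNormedType.Exports.
Local Open Scope ring_scope.
Local Open Scope classical_set_scope.

Definition hnorm (R : realType) (X : lmodType R) (ip : X -> X -> R) (v : X) : R :=
  Num.sqrt (ip v v).

Definition is_hilbert (R : realType) (X : lmodType R) (ip : X -> X -> R) : Prop :=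
  [/\ (forall u v, ip u v = ip v u),
      (forall a u v w, ip (a *: u + v) w = a * ip u w + ip v w),
      (forall v, v != 0 -> 0 < ip v v) &
      (forall u : nat -> X,
          (forall e : R, 0 < e -> exists N, forall m n, (N <= m)%N -> (N <= n)%N ->
                 hnorm ip (u m - u n) < e) ->
          exists x, forall e : R, 0 < e -> exists N, forall n, (N <= n)%N ->
                 hnorm ip (u n - x) < e)].

Definition is_dual (R : realType) (X : lmodType R) (ip : X -> X -> R) (phi : X -> R) : Prop :=
  (forall a u v, phi (a *: u + v) = a * phi u + phi v) /\
  (exists C : R, forall v, `|phi v| <= C * hnorm ip v).

Definition dual_norm (R : realType) (X : lmodType R) (ip : X -> X -> R) (phi : X -> R) : R :=
  sup [set r | exists v, hnorm ip v <= 1 /\ r = `|phi v|].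

Definition is_fd_subspace (R : realType) (X : lmodType R) (S : set X) : Prop :=
  [/\ S 0,
      (forall a u v, S u -> S v -> S (a *: u + v)) &
      (exists s : seq X, (forall i, (i < size s)%N -> S s`_i) /\
         forall v, S v -> exists c : nat -> R, v = \sum_(i < size s) c i *: s`_i)].

(* ---------- conditions on the operator A (written <A w, v> = Aop w v) ---------- *)

Definition cond_SM (R : realType) (X : lmodType R) (ip : X -> X -> R)
    (Aop : X -> X -> R) (alpha : R) : Prop :=
  0 < alpha /\
  forall v w, alpha * hnorm ip (v - w) ^+ 2 <= Aop v (v - w) - Aop w (v - w).

Definition cond_LIP (R : realType) (X : lmodType R) (ip : X -> X -> R)
    (Aop : X -> X -> R) (L : R -> R) : Prop :=
  forall th : R, 0 < th ->
    0 < L th /\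
    forall v w phi, Num.max (hnorm ip v) (hnorm ip (v - w)) <= th ->
      Aop v phi - Aop w phi <= L th * hnorm ip (v - w) * hnorm ip phi.

Definition cond_POT (R : realType) (X : lmodType R)
    (Aop : X -> X -> R) (P : X -> R) : Prop :=
  forall w v, (fun t : R => (P (w + t *: v) - P w) / t) @ 0^' --> Aop w v.

Definition energy (R : realType) (X : lmodType R) (P F : X -> R) (v : X) : R :=
  P v - F v.

Definition is_alg_solver (R : realType) (X : lmodType R) (ip : X -> X -> R)
    (Xl : set X) (qalg : R) (Psi : (X -> R) -> X -> X) : Prop :=
  0 < qalg /\ qalg < 1 /\
  forall phi, is_dual ip phi ->
  forall wstar, Xl wstar -> (forall v, Xl v -> ip wstar v = phi v) ->
  forall w, Xl w ->
    Xl (Psi phi w) /\ hnorm ip (wstar - Psi phi w) <= qalg * hnorm ip (wstar - w).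

(* functional defining the Zarantonello step Phi_l(delta; w):
   v |-> <<w, v>> + delta [F(v) - <A w, v>] *)
Definition zar_rhs (R : realType) (X : lmodType R) (ip : X -> X -> R)
    (Aop : X -> X -> R) (F : X -> R) (delta : R) (w : X) : X -> R :=
  fun v => ip w v + delta * (F v - Aop w v).

Definition first_stop (Pr : nat -> Prop) (n : nat) : Prop :=
  (1 <= n)%N /\ Pr n /\ forall m, (1 <= m)%N -> (m < n)%N -> ~ Pr m.

(* U k stands for u_l^{k, ibar}, ib k for ibar[l,k];
   the inner iterates are u_l^{k,i} = iter i (Psi phi_k) (U (k-1)),
   with u_l^{k,0} = U (k-1). *)
Definition ailfem_level_run (R : realType) (X : lmodType R) (ip : X -> X -> R)
    (Aop : X -> X -> R) (F : X -> R) (Psi : (X -> R) -> X -> X) (eta : X -> R)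
    (lam_lin lam_alg delta : R) (imin : nat) (u0 : X)
    (U : nat -> X) (ib : nat -> nat) (K : nat) : Prop :=
  U 0%N = u0 /\
  forall j, (1 <= j)%N -> (j <= K)%N ->
    let w := U j.-1 in
    let it := fun i => iter i (Psi (zar_rhs ip Aop F delta w)) w in
    first_stop (fun i => hnorm ip (it i.-1 - it i)
                           <= lam_alg * (lam_lin * eta (it i) + hnorm ip (it i - w))
                         /\ (imin <= i)%N) (ib j)
    /\ U j = it (ib j).

Definition kloop_stop (R : realType) (X : lmodType R) (ip : X -> X -> R)
    (P F : X -> R) (eta : X -> R) (lam_lin M : R) (U : nat -> X) (j : nat) : Prop :=
  energy P F (U j.-1) - energy P F (U j) <= lam_lin ^+ 2 * eta (U j) ^+ 2
  /\ hnorm ip (U j) <= 2 * M.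

Definition qE2 (R : realType) (L : R -> R) (alpha qalg : R) (imin : nat) (tau d : R) : R :=
  1 - (d^-1 - L (5 * tau)) * ((1 - qalg ^+ imin) ^+ 2 * d ^+ 2 * alpha ^+ 2) / L (2 * tau).

From HB Require Import structures.
From mathcomp Require Import all_boot all_order all_algebra.
From mathcomp Require Import all_classical all_reals all_analysis.
From mathcomp Require Import ring lra.
Import Order.TTheory GRing.Theory Num.Theory.
Import numFieldNormedType.Exports.
Local Open Scope ring_scope.
Local Open Scope classical_set_scope.

(* Write [w := U k], let [Phi] be the exact Zarantonello update of [w] (it exists
   by the Riesz representation on the finite-dimensional [Xl]), [e0 := Phi - w]
   and [e := Phi - U k.+1], so that [|||e||| <= q |||e0|||] with [q := qalg^imin].
   On [Xl], [<A w, v> - F v = - <<e0, v>> / delta].  By (POT) and the mean value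
   theorem, [E (x + d) - E x - <A x, d> + F d] lies between [alpha/2 |||d|||^2]
   and [L/2 |||d|||^2].  The upper bound along [d := e0 - e] gives the decrease
   [E w - E (U k.+1) >= (1/delta - L[5 tau]) (1 - q)^2 |||e0|||^2]; the lower
   bound along [d := ustar - w] and Young's inequality give
   [E w - E ustar <= |||e0|||^2 / (2 alpha delta^2)]; together they are the
   contraction.  The a-priori bounds [|||e0||| <= 2 tau] and
   [|||U k.+1 - w||| <= 8 tau / 3] keep the segment [[w, U k.+1]] in the ball
   where [L[5 tau]] applies, and [E ustar <= E (U k.+1)] because by strong
   monotonicity [ustar] minimises [E] on [Xl]. *)

Section InnerProduct.
Context {R : realType} {X : lmodType R} {ip : X -> X -> R} (hX : is_hilbert ip).

Lemma ipC u v : ip u v = ip v u.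
Proof. by case: hX. Qed.

Lemma ipDZl a u v w : ip (a *: u + v) w = a * ip u w + ip v w.
Proof. by case: hX. Qed.

Lemma ip0l w : ip 0 w = 0.
Proof. by have := ipDZl 1 0 0 w; rewrite scaler0 addr0 mul1r; lra. Qed.

Lemma ipDl u v w : ip (u + v) w = ip u w + ip v w.
Proof. by have := ipDZl 1 u v w; rewrite scale1r mul1r. Qed.

Lemma ipZl a u w : ip (a *: u) w = a * ip u w.
Proof. by have := ipDZl a u 0 w; rewrite addr0 ip0l addr0. Qed.

Lemma ipNl u w : ip (- u) w = - ip u w.
Proof. by rewrite -scaleN1r ipZl mulN1r. Qed.

Lemma ipBl u v w : ip (u - v) w = ip u w - ip v w.
Proof. by rewrite ipDl ipNl. Qed.

Lemma ipDr u v w : ip w (u + v) = ip w u + ip w v.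
Proof. by rewrite ipC ipDl !(ipC w). Qed.

Lemma ipDZr a u v w : ip w (a *: u + v) = a * ip w u + ip w v.
Proof. by rewrite ipC ipDZl !(ipC w). Qed.

Lemma ipZr a u w : ip w (a *: u) = a * ip w u.
Proof. by rewrite ipC ipZl ipC. Qed.

Lemma ipBr u v w : ip w (u - v) = ip w u - ip w v.
Proof. by rewrite ipC ipBl !(ipC w). Qed.

Lemma ipvv_gt0 v : v != 0 -> 0 < ip v v.
Proof. by case: hX => _ _ + _; apply. Qed.

Lemma ipvv_ge0 v : 0 <= ip v v.
Proof. by have [->|/ipvv_gt0/ltW//] := eqVneq v 0; rewrite ip0l. Qed.

Lemma hnorm_sqr v : hnorm ip v ^+ 2 = ip v v.
Proof. by rewrite sqr_sqrtr // ipvv_ge0. Qed.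

Lemma hnorm_eq0 v : hnorm ip v = 0 -> v = 0.
Proof.
move=> v0; have [//|/ipvv_gt0] := eqVneq v 0.
by rewrite -hnorm_sqr v0 expr0n ltxx.
Qed.

Lemma hnormZ a v : hnorm ip (a *: v) = `|a| * hnorm ip v.
Proof.
by rewrite /hnorm ipZl ipZr mulrA -expr2 sqrtrM ?sqr_ge0 // sqrtr_sqr.
Qed.

Lemma hnormN v : hnorm ip (- v) = hnorm ip v.
Proof. by rewrite -scaleN1r hnormZ normrN1 mul1r. Qed.

Lemma cauchy_schwarz u v : `|ip u v| <= hnorm ip u * hnorm ip v.
Proof.
have quad t : 0 <= t ^+ 2 * ip u u + 2 * t * ip u v + ip v v.
  have := ipvv_ge0 (t *: u + v).
  by rewrite ipDl !ipDr !ipZl !ipZr (ipC v u); lra.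
rewrite -[_ * _]sqrtrM ?ipvv_ge0 // -sqrtr_sqr ler_sqrt ?mulr_ge0 ?ipvv_ge0 //.
have [->|/ipvv_gt0 uu_gt0] := eqVneq u 0; first by rewrite !ip0l expr0n mul0r.
have := quad (- ip u v / ip u u).
have -> : (- ip u v / ip u u) ^+ 2 * ip u u + 2 * (- ip u v / ip u u) * ip u v
          + ip v v = ip v v - ip u v ^+ 2 / ip u u by field; rewrite gt_eqF.
by rewrite subr_ge0 ler_pdivrMr // mulrC.
Qed.

Lemma ip_le_hnormM u v : ip u v <= hnorm ip u * hnorm ip v.
Proof. exact: le_trans (ler_norm _) (cauchy_schwarz u v). Qed.

Lemma ler_hnormD u v : hnorm ip (u + v) <= hnorm ip u + hnorm ip v.
Proof.
rewrite -(ler_pXn2r (n := 2)) ?nnegrE ?addr_ge0 ?sqrtr_ge0 //.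
rewrite hnorm_sqr ipDl !ipDr (ipC v u) sqrrD !hnorm_sqr.
by have := ip_le_hnormM u v; lra.
Qed.

Lemma ler_hnormB u v : hnorm ip (u - v) <= hnorm ip u + hnorm ip v.
Proof. by rewrite -(hnormN v) ler_hnormD. Qed.

End InnerProduct.

Section Duality.
Context {R : realType} {X : lmodType R} {ip : X -> X -> R}.

Definition linear_functional (phi : X -> R) :=
  forall a u v, phi (a *: u + v) = a * phi u + phi v.

Section DualLinear.
Context {phi : X -> R} (phi_lin : linear_functional phi).

Lemma linear_functional0 : phi 0 = 0.
Proof. by have := phi_lin 1 0 0; rewrite scaler0 addr0 mul1r; lra. Qed.

Lemma linear_functionalZ a u : phi (a *: u) = a * phi u.
Proof. by have := phi_lin a u 0; rewrite addr0 linear_functional0 addr0. Qed.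

Lemma linear_functionalD u v : phi (u + v) = phi u + phi v.
Proof. by have := phi_lin 1 u v; rewrite scale1r mul1r. Qed.

Lemma linear_functionalN u : phi (- u) = - phi u.
Proof. by rewrite -scaleN1r linear_functionalZ mulN1r. Qed.

End DualLinear.

Lemma linear_functional_neq {phi psi} : linear_functional phi -> linear_functional psi ->
  psi <> phi -> exists2 x, x != 0 & phi x - psi x != 0.
Proof.
move=> phi_lin psi_lin psi_neq_phi.
have [x phi_psi_x] : exists x, phi x - psi x != 0.
  apply: contrapT => /forallNP all0; apply: psi_neq_phi; apply/funext => v.
  by apply/eqP; rewrite eq_sym -subr_eq0; apply: contrapT => /negP; apply: all0.
exists x => //; apply: contraNneq phi_psi_x => ->.
by rewrite (linear_functional0 phi_lin) (linear_functional0 psi_lin) subrr.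
Qed.

Lemma is_dualD {phi psi} : is_dual ip phi -> is_dual ip psi ->
  is_dual ip (fun v => phi v + psi v).
Proof.
move=> [phi_lin [C1 hC1]] [psi_lin [C2 hC2]]; split.
  by move=> a u v; rewrite phi_lin psi_lin; ring.
exists (C1 + C2) => v; apply: le_trans (ler_normD _ _) _.
by have := hC1 v; have := hC2 v; lra.
Qed.

Lemma is_dualZ a {phi} : is_dual ip phi -> is_dual ip (fun v => a * phi v).
Proof.
move=> [phi_lin [C hC]]; split; first by move=> b u v; rewrite phi_lin; ring.
by exists (`|a| * C) => v; rewrite normrM -mulrA ler_wpM2l.
Qed.

Lemma is_dualB {phi psi} : is_dual ip phi -> is_dual ip psi ->
  is_dual ip (fun v => phi v - psi v).
Proof.
move=> hphi hpsi; have := is_dualD hphi (is_dualZ (-1) hpsi).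
by congr is_dual; apply/funext => v; rewrite mulN1r.
Qed.

Hypothesis hX : is_hilbert ip.

Lemma is_dual_ip w : is_dual ip (ip w).
Proof.
split; first by move=> a u v; rewrite ipDr // ipZr.
by exists (hnorm ip w); apply: cauchy_schwarz.
Qed.

Lemma has_sup_dual_norm {phi} : is_dual ip phi ->
  has_sup [set r | exists v, hnorm ip v <= 1 /\ r = `|phi v|].
Proof.
move=> [phi_lin [C hC]]; split; first by exists `|phi 0|, 0; rewrite /hnorm ip0l // sqrtr0.
exists (Num.max C 0) => _ [u [u_le1 ->]]; apply: le_trans (hC u) _.
have C_le : C <= Num.max C 0 by rewrite le_max lexx.
have max_ge0 : 0 <= Num.max C 0 by rewrite le_max lexx orbT.
by have u_ge0 : 0 <= hnorm ip u := sqrtr_ge0 _; nra.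
Qed.

Lemma dual_norm_ge0 {phi} : is_dual ip phi -> 0 <= dual_norm ip phi.
Proof.
move=> hphi; have ub := sup_upper_bound (has_sup_dual_norm hphi).
apply: le_trans (normr_ge0 (phi 0)) _; apply: ub.
by exists 0; rewrite /hnorm ip0l // sqrtr0.
Qed.

Lemma le_dual_norm {phi} v : is_dual ip phi ->
  `|phi v| <= dual_norm ip phi * hnorm ip v.
Proof.
move=> hphi; have ub := sup_upper_bound (has_sup_dual_norm hphi).
have phi_lin := hphi.1.
have [/(hnorm_eq0 hX) ->|v_neq0] := eqVneq (hnorm ip v) 0.
  by rewrite linear_functional0 // normr0 /hnorm ip0l // sqrtr0 mulr0.
have v_gt0 : 0 < hnorm ip v by rewrite lt_def v_neq0 sqrtr_ge0.
have : `|phi ((hnorm ip v)^-1 *: v)| <= dual_norm ip phi.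
  apply: ub; exists ((hnorm ip v)^-1 *: v); split => //.
  by rewrite (hnormZ hX) ger0_norm ?invr_ge0 ?sqrtr_ge0 // mulVf.
rewrite linear_functionalZ // normrM ger0_norm ?invr_ge0 ?sqrtr_ge0 //.
by rewrite ler_pdivrMl // mulrC.
Qed.

Lemma dual_norm_gt0 {phi x} : is_dual ip phi -> phi x != 0 -> 0 < dual_norm ip phi.
Proof.
move=> hphi phix_neq0; have := le_dual_norm x hphi.
have := normr_gt0 (phi x); rewrite phix_neq0 => phix_gt0.
have x_ge0 : 0 <= hnorm ip x := sqrtr_ge0 _; nra.
Qed.

End Duality.

Section Riesz.
Context {R : realType} {X : lmodType R} {ip : X -> X -> R} (hX : is_hilbert ip).

Fixpoint in_span (s : seq X) (v : X) : Prop :=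
  if s is x :: s' then exists c u, in_span s' u /\ v = c *: x + u else v = 0.

Lemma in_spanDZ s a u v : in_span s u -> in_span s v -> in_span s (a *: u + v).
Proof.
elim: s u v => [|x s IH] u v /=; first by move=> -> ->; rewrite scaler0 addr0.
move=> [c [u' [su' ->]]] [d [v' [sv' ->]]].
exists (a * c + d), (a *: u' + v'); split; first exact: IH.
by rewrite scalerDr scalerA scalerDl -!addrA; congr (_ + _); rewrite addrCA.
Qed.

Lemma in_span_sum s (c : nat -> R) : in_span s (\sum_(i < size s) c i *: s`_i).
Proof.
elim: s c => [|x s IH] c /=; first by rewrite big_ord0.
rewrite big_ord_recl /=; exists (c 0%N), (\sum_(i < size s) c i.+1 *: s`_i).
by split => //; apply: (IH (fun i => c i.+1)).
Qed.

Lemma riesz_span s {phi} : linear_functional phi ->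
  exists2 w, in_span s w & forall v, in_span s v -> ip w v = phi v.
Proof.
elim: s phi => [|x s IH] phi phi_lin.
  by exists 0 => //= v ->; rewrite ip0l // linear_functional0.
have [w sw w_phi] := IH phi phi_lin.
have [p sp p_x] := IH (ip x) (is_dual_ip hX x).1.
(* Gram-Schmidt: [y] is the component of [x] orthogonal to [span s] *)
set y := x - p.
have y_orth u : in_span s u -> ip y u = 0.
  by move=> su; rewrite /y ipBl // p_x // subrr.
have decomp c u : c *: x + u = c *: y + (c *: p + u).
  by rewrite /y scalerBr -addrA (addrA (- _)) addNr add0r.
have [y0|y_neq0] := eqVneq y 0.
  exists w; first by exists 0, w; rewrite scale0r add0r.
  move=> _ [c [u [su ->]]]; rewrite decomp y0 scaler0 add0r.
  by apply: w_phi; apply: in_spanDZ.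
have yy_gt0 := ipvv_gt0 hX _ y_neq0.
set b := (phi y - ip w y) / ip y y.
exists (b *: y + w).
  exists b, (w - b *: p); split; last by rewrite /y scalerBr addrA addrAC.
  by rewrite addrC -scaleNr; apply: in_spanDZ.
move=> _ [c [u [su ->]]]; have scpu : in_span s (c *: p + u) by apply: in_spanDZ.
rewrite decomp ipDZl // !(ipDZr hX c y) (y_orth _ scpu) (w_phi _ scpu) (phi_lin c y).
by rewrite /b; field; rewrite gt_eqF.
Qed.

Lemma riesz_fd_subspace {Xl : set X} {phi} :
  is_fd_subspace Xl -> linear_functional phi ->
  exists2 w, Xl w & forall v, Xl v -> ip w v = phi v.
Proof.
move=> [Xl0 XlDZ [s [s_Xl Xl_span]]] phi_lin.
have [w sw w_phi] := riesz_span s phi_lin.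
exists w; last by move=> v /Xl_span [c ->]; apply/w_phi/in_span_sum.
elim: s s_Xl w sw {Xl_span w_phi} => [|x s IH] s_Xl w /=; first by move->.
move=> [c [u [su ->]]]; apply: XlDZ; first exact: (s_Xl 0%N).
by apply: IH su => i; apply: (s_Xl i.+1).
Qed.

End Riesz.

Section Potential.
Context {R : realType} {X : lmodType R} {Aop : X -> X -> R} {P : X -> R}.
Hypothesis hP : cond_POT Aop P.

Lemma potential_is_derive x d t :
  is_derive t (1 : R) (fun s : R => P (x + s *: d)) (Aop (x + t *: d) d).
Proof.
set w := x + t *: d.
have quot : (fun h : R => h^-1 *: (((fun s : R => P (x + s *: d)) \o shift t) (h *: 1)
    - P (x + t *: d))) = (fun h : R => (P (w + h *: d) - P w) / h).
  apply/funext => h /=; rewrite [h *: 1]mulr1 scalerDl /w.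
  by rewrite [h *: d + _]addrC addrA mulrC.
have := hP w d; rewrite -quot => cvg_quot.
by apply: DeriveDef; [apply/cvg_ex; exists (Aop w d) | exact: cvg_lim].
Qed.

(* MVT for [t |-> P (x + t d) - (a t + c t^2)]: the quadratic correction lets a
   single mean value argument give both energy bounds of the next section. *)
Lemma potential_mvt x d a c : exists2 t : R, 0 <= t <= 1 &
  P (x + d) - P x - a - c = Aop (x + t *: d) d - a - 2 * c * t.
Proof.
pose q : {poly R} := a *: 'X + c *: 'X^2.
pose phi := (fun t : R => P (x + t *: d)) - (fun t => q.[t]).
have dq t : q^`().[t] = a + 2 * c * t.
  by rewrite /q derivD !derivZ derivX derivXn !hornerE /=; ring.
have der t : is_derive t (1 : R) phi (Aop (x + t *: d) d - q^`().[t]).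
  by apply: is_deriveB; [apply: potential_is_derive|apply: is_derive_poly].
have cont : {within `[0, 1], continuous phi}.
  by apply: derivable_within_continuous => t _; exact: (der t).(ex_derive).
have [t t01 mvt] := MVT_segment ler01 (fun t _ => der t) cont.
exists t; first by move: t01; rewrite in_itv.
move: mvt; rewrite /phi !fctE /= dq !hornerE /= scale1r scale0r addr0 subr0.
by rewrite !mulr1 !mulr0; lra.
Qed.

End Potential.

Section Energy.
Context {R : realType} {X : lmodType R} {ip : X -> X -> R} {Aop : X -> X -> R}
  {F P : X -> R}.
Hypotheses (hX : is_hilbert ip) (hA : forall w, is_dual ip (Aop w))
  (hF : is_dual ip F) (hP : cond_POT Aop P).
Local Notation E := (energy P F).

Lemma energy_incrE x d : E (x + d) - E x = P (x + d) - P x - F d.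
Proof. by rewrite /energy (linear_functionalD hF.1); lra. Qed.

Lemma energy_incr_ge alpha x d : cond_SM ip Aop alpha ->
  Aop x d - F d + alpha / 2 * hnorm ip d ^+ 2 <= E (x + d) - E x.
Proof.
move=> [_ hSM]; rewrite energy_incrE.
have [t /andP[t_ge0 _]] :=
  potential_mvt hP x d (Aop x d) (alpha / 2 * hnorm ip d ^+ 2).
suff : alpha * t * hnorm ip d ^+ 2 <= Aop (x + t *: d) d - Aop x d by lra.
have [->|t_neq0] := eqVneq t 0; first by rewrite scale0r addr0 !mulr0 mul0r subrr.
have t_gt0 : 0 < t by rewrite lt_def t_neq0.
have := hSM (x + t *: d) x.
have -> : x + t *: d - x = t *: d by rewrite addrAC subrr add0r.
rewrite !(linear_functionalZ (hA _).1) (hnormZ hX) ger0_norm // => mono.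
by rewrite -(ler_pM2l t_gt0); nra.
Qed.

Lemma energy_incr_le L th x d : cond_LIP ip Aop L -> 0 < th ->
  (forall t, 0 <= t <= 1 -> Num.max (hnorm ip (x + t *: d)) (hnorm ip (t *: d)) <= th) ->
  E (x + d) - E x <= Aop x d - F d + L th / 2 * hnorm ip d ^+ 2.
Proof.
move=> hLIP th_gt0 seg_le; rewrite energy_incrE.
have [t t01] := potential_mvt hP x d (Aop x d) (L th / 2 * hnorm ip d ^+ 2).
suff : Aop (x + t *: d) d - Aop x d <= L th * (t * hnorm ip d) * hnorm ip d.
  by rewrite expr2; lra.
have /andP[t_ge0 _] := t01.
have -> : t * hnorm ip d = hnorm ip (x + t *: d - x).
  by rewrite addrAC subrr add0r (hnormZ hX) ger0_norm.
by apply: (hLIP th th_gt0).2; rewrite addrAC subrr add0r; apply: seg_le.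
Qed.

Lemma energy_ge_discrete_solution alpha ustar v : cond_SM ip Aop alpha ->
  Aop ustar (v - ustar) = F (v - ustar) -> E ustar <= E v.
Proof.
move=> hSM galerkin; have [alpha_gt0 _] := hSM.
have := energy_incr_ge _ ustar (v - ustar) hSM.
rewrite (addrC ustar) subrK galerkin subrr add0r.
have : 0 <= alpha / 2 * hnorm ip (v - ustar) ^+ 2.
  by rewrite mulr_ge0 ?sqr_ge0 ?divr_ge0 ?ltW.
lra.
Qed.

Lemma SM_le_LIP alpha L (x0 : X) th : cond_SM ip Aop alpha -> cond_LIP ip Aop L ->
  x0 != 0 -> 0 < th -> alpha <= L th.
Proof.
move=> [_ hSM] hLIP x0_neq0 th_gt0.
have x0_gt0 : 0 < hnorm ip x0.
  by rewrite lt_def sqrtr_ge0 andbT; apply: contra_neq x0_neq0; apply: hnorm_eq0.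
set v := (th / hnorm ip x0) *: x0.
have v_th : hnorm ip v = th.
  by rewrite /v (hnormZ hX) ger0_norm ?divr_ge0 ?ltW // divfK // gt_eqF.
have := hSM v 0; have := (hLIP th th_gt0).2 v 0 v.
rewrite !subr0 v_th maxxx lexx => /(_ erefl) lip mono.
have th2_gt0 : 0 < th ^+ 2 by rewrite exprn_gt0.
by rewrite -(ler_pM2r th2_gt0) expr2 mulrA; lra.
Qed.

End Energy.

Section RealInequalities.
Context {R : realFieldType}.

Lemma le_of_sqr_le_mul (n K : R) : 0 <= n -> 0 <= K -> n ^+ 2 <= n * K -> n <= K.
Proof.
move=> n_ge0 K_ge0 sqr_le; have [->//|n_neq0] := eqVneq n 0.
have n_gt0 : 0 < n by rewrite lt_def n_neq0.
by rewrite -(ler_pM2l n_gt0) -expr2.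
Qed.

Lemma young_le (x y : R) {a d : R} : 0 < a -> 0 < d ->
  x * y / d - a / 2 * y ^+ 2 <= x ^+ 2 / (2 * a * d ^+ 2).
Proof.
move=> a_gt0 d_gt0; rewrite ler_pdivlMr ?mulr_gt0 ?exprn_gt0 //.
have : 0 <= (x - a * d * y) ^+ 2 by exact: sqr_ge0.
have -> : (x * y / d - a / 2 * y ^+ 2) * (2 * a * d ^+ 2)
    = 2 * a * x * y * d - a ^+ 2 * y ^+ 2 * d ^+ 2.
    by field; rewrite gt_eqF.
by rewrite sqrrB exprMn exprMn; lra.
Qed.

(* [A], [a], [B] stand for the squared norm of the exact step, its scalar product
   with the solver error and the squared norm of the solver error. *)
Lemma inexact_descent_le {A a B D L q : R} :
  0 <= A -> a <= q * A -> B <= q ^+ 2 * A -> 0 < L -> L < D -> 0 <= q <= 1 ->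
  (D - L) * (1 - q) ^+ 2 * A <= (A - a) * D - L / 2 * (A - 2 * a + B).
Proof.
move=> A_ge0 a_le B_le L_gt0 L_lt_D /andP[q_ge0 q_le1].
have h1 : (1 - q) ^+ 2 * A <= A - a.
  suff : (1 - q) ^+ 2 * A <= (1 - q) * A by lra.
  by rewrite expr2 -mulrA ler_wpM2l ?subr_ge0 // ler_piMl // ?subr_ge0; lra.
have h2 : (D - L) * ((1 - q) ^+ 2 * A) <= (D - L) * (A - a).
  by rewrite ler_wpM2l // subr_ge0 ltW.
have h3 : L / 2 * B <= L / 2 * (q ^+ 2 * A) by rewrite ler_wpM2l // divr_ge0 // ltW.
have h4 : 0 <= L / 2 * (1 - q ^+ 2) * A.
  have q2_le1 : q ^+ 2 <= 1 by rewrite expr_le1.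
  have L2_ge0 : 0 <= L / 2 by rewrite divr_ge0 // ltW.
  by rewrite !mulr_ge0 //; lra.
rewrite -mulrA; lra.
Qed.

End RealInequalities.

Section ContractionConstant.
Context {R : realType}.

Lemma gain_mul_gap_le {D L5 L2 a d q A G : R} : L5 < D -> 0 < a <= L2 -> 0 <= A ->
  2 * a * d ^+ 2 * G <= A ->
  (D - L5) * ((1 - q) ^+ 2 * d ^+ 2 * a ^+ 2) / L2 * G <= (D - L5) * (1 - q) ^+ 2 * A.
Proof.
move=> L5_lt_D /andP[a_gt0 a_le] A_ge0 gap_le.
have L2_gt0 : 0 < L2 := lt_le_trans a_gt0 a_le.
have K_ge0 : 0 <= (D - L5) * (1 - q) ^+ 2 by rewrite mulr_ge0 ?sqr_ge0 // subr_ge0 ltW.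
have r_ge0 : 0 <= a / (2 * L2) by rewrite divr_ge0 ?mulr_ge0 ?ltW.
have r_le1 : a / (2 * L2) <= 1 by rewrite ler_pdivrMr ?mulr_gt0 //; lra.
have -> : (D - L5) * ((1 - q) ^+ 2 * d ^+ 2 * a ^+ 2) / L2 * G
    = (D - L5) * (1 - q) ^+ 2 * (a / (2 * L2) * (2 * a * d ^+ 2 * G)).
  by field; rewrite gt_eqF.
rewrite ler_wpM2l //; apply: le_trans (ler_wpM2l r_ge0 gap_le) _.
by rewrite ler_piMl.
Qed.

Lemma qE2_ge0_lt1 {L : R -> R} {alpha qalg imin tau d} :
  0 < d -> d < (L (5 * tau))^-1 -> 0 < alpha -> alpha <= L (5 * tau) ->
  alpha <= L (2 * tau) -> 0 <= qalg ^+ imin < 1 ->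
  0 <= qE2 L alpha qalg imin tau d < 1.
Proof.
set L5 := L (5 * tau); set L2 := L (2 * tau); set q := qalg ^+ imin.
move=> d_gt0 d_lt a_gt0 a_le5 a_le2 /andP[q_ge0 q_lt1].
have L5_gt0 : 0 < L5 := lt_le_trans a_gt0 a_le5.
have L2_gt0 : 0 < L2 := lt_le_trans a_gt0 a_le2.
have dL5_lt1 : d * L5 < 1 by rewrite -ltr_pdivlMr // mul1r.
(* [1 - qE2] factors into four terms in [(0, 1]] *)
have -> : qE2 L alpha qalg imin tau d
    = 1 - (1 - d * L5) * (d * L5) * (1 - q) ^+ 2 * (alpha / L5) * (alpha / L2).
  by rewrite /qE2 -/L5 -/L2 -/q; field; rewrite !gt_eqF.
have x_gt0 : 0 < (1 - d * L5) * (d * L5) by rewrite mulr_gt0 ?subr_gt0 ?mulr_gt0.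
have x_le1 : (1 - d * L5) * (d * L5) <= 1 by nra.
have y_gt0 : 0 < (1 - q) ^+ 2 by rewrite exprn_gt0 // subr_gt0.
have y_le1 : (1 - q) ^+ 2 <= 1 by rewrite expr_le1 //; lra.
have z_gt0 : 0 < alpha / L5 by rewrite divr_gt0.
have z_le1 : alpha / L5 <= 1 by rewrite ler_pdivrMr // mul1r.
have w_gt0 : 0 < alpha / L2 by rewrite divr_gt0.
have w_le1 : alpha / L2 <= 1 by rewrite ler_pdivrMr // mul1r.
have p_gt0 := mulr_gt0 (mulr_gt0 (mulr_gt0 x_gt0 y_gt0) z_gt0) w_gt0.
have p_le1 : (1 - d * L5) * (d * L5) * (1 - q) ^+ 2 * (alpha / L5) * (alpha / L2) <= 1.
  have xy_le1 := mulr_ile1 (ltW x_gt0) (ltW y_gt0) x_le1 y_le1.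
  have xyz_le1 := mulr_ile1 (ltW (mulr_gt0 x_gt0 y_gt0)) (ltW z_gt0) xy_le1 z_le1.
  exact: mulr_ile1 (ltW (mulr_gt0 (mulr_gt0 x_gt0 y_gt0) z_gt0)) (ltW w_gt0) xyz_le1 w_le1.
by apply/andP; split; lra.
Qed.

Lemma qE2_sqrt_cvg1 (L : R -> R) alpha qalg imin tau :
  Num.sqrt (qE2 L alpha qalg imin tau d) @[d --> 0^'+] --> (1 : R).
Proof.
set K := (1 - qalg ^+ imin) ^+ 2 * alpha ^+ 2 / L (2 * tau).
pose p : {poly R} := 1 - K *: ('X - L (5 * tau) *: 'X^2).
have p_cvg : (fun d => Num.sqrt p.[d]) @ 0 --> Num.sqrt p.[0].
  by apply: continuous_comp; [exact: continuous_horner | exact: sqrt_continuous].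
rewrite (_ : p.[0] = 1) ?sqrtr1 in p_cvg; last by rewrite /p !hornerE /=; ring.
apply: cvg_trans (cvg_at_right_filter p_cvg); apply: near_eq_cvg; near=> d.
have d_gt0 : 0 < d by near: d; exact: nbhs_right_gt.
rewrite /qE2 /p !hornerE /= /K; congr Num.sqrt.
have [->|L2_neq0] := eqVneq (L (2 * tau)) 0; first by rewrite invr0 !(mulr0, mul0r).
by field; rewrite L2_neq0 gt_eqF.
Unshelve. all: by end_near.
Qed.

Lemma four_mul_le_tau (M alpha L3 : R) : 0 < M -> 0 < alpha <= L3 ->
  4 * M <= M + 3 * M * Num.sqrt (L3 / alpha).
Proof.
move=> M_gt0 /andP[a_gt0 a_le].
have : 1 <= Num.sqrt (L3 / alpha).
  have L3_gt0 := lt_le_trans a_gt0 a_le.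
  rewrite -[X in X <= _]sqrtr1 ler_sqrt; last by rewrite divr_ge0 // ltW.
  by rewrite ler_pdivlMr // mul1r.
have : 0 < 3 * M by rewrite mulr_gt0.
nra.
Qed.

End ContractionConstant.

Lemma fd_subspaceB {R : realType} {X : lmodType R} {Xl : set X} {u v : X} :
  is_fd_subspace Xl -> Xl u -> Xl v -> Xl (u - v).
Proof. by move=> [_ XlDZ _] Xu Xv; rewrite addrC -scaleN1r; apply: XlDZ. Qed.

Section ZarantonelloStep.
Context {R : realType} {X : lmodType R} {ip Aop : X -> X -> R} {F P : X -> R}
  {Xl : set X}.
Hypotheses (hX : is_hilbert ip) (hA : forall w, is_dual ip (Aop w))
  (hF : is_dual ip F) (hP : cond_POT Aop P) (hXl : is_fd_subspace Xl).
Context {delta : R} {w Phi : X}.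
Hypotheses (delta_gt0 : 0 < delta) (Xl_w : Xl w) (Xl_Phi : Xl Phi)
  (hPhi : forall v, Xl v -> ip Phi v = zar_rhs ip Aop F delta w v).
Local Notation E := (energy P F).

Lemma zarantonello_residual v : Xl v -> ip (Phi - w) v = delta * (F v - Aop w v).
Proof. by move=> Xv; rewrite ipBl // hPhi // /zar_rhs addrAC subrr add0r. Qed.

Lemma zarantonello_residual_div v : Xl v ->
  Aop w v - F v = - (ip (Phi - w) v / delta).
Proof. by move=> Xv; rewrite zarantonello_residual //; field; rewrite gt_eqF. Qed.

Lemma zarantonello_step_le {L th} : cond_LIP ip Aop L -> 0 < th -> hnorm ip w <= th ->
  hnorm ip (Phi - w)
    <= delta * (dual_norm ip (fun v => F v - Aop 0 v) + L th * hnorm ip w).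
Proof.
move=> hLIP th_gt0 w_le; set e0 := Phi - w; set dn := dual_norm _ _.
have Xl_e0 : Xl e0 := fd_subspaceB hXl Xl_Phi Xl_w.
have res_dual := is_dualB hF (hA 0).
have res_le : F e0 - Aop 0 e0 <= dn * hnorm ip e0.
  exact: le_trans (ler_norm _) (le_dual_norm hX e0 res_dual).
have lip_le : Aop 0 e0 - Aop w e0 <= L th * hnorm ip w * hnorm ip e0.
  have := (hLIP th th_gt0).2 w 0 (- e0).
  rewrite subr0 maxxx (hnormN hX) !(linear_functionalN (hA _).1) => /(_ w_le).
  by rewrite opprK addrC.
apply: le_of_sqr_le_mul; first exact: sqrtr_ge0.
  have w_ge0 : 0 <= hnorm ip w := sqrtr_ge0 _.
  have L_gt0 := (hLIP th th_gt0).1.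
  apply: mulr_ge0; first exact: ltW.
  by apply: addr_ge0; [exact: dual_norm_ge0 | exact: mulr_ge0 (ltW L_gt0) w_ge0].
rewrite (hnorm_sqr hX) zarantonello_residual // mulrCA ler_wpM2l ?(ltW delta_gt0) //.
by rewrite mulrDr; lra.
Qed.

Lemma energy_gap_le_zarantonello_step {alpha v} : cond_SM ip Aop alpha -> Xl v ->
  2 * alpha * delta ^+ 2 * (E w - E v) <= hnorm ip (Phi - w) ^+ 2.
Proof.
move=> hSM Xl_v; have [alpha_gt0 _] := hSM.
have Xl_d : Xl (v - w) := fd_subspaceB hXl Xl_v Xl_w.
have := energy_incr_ge hX hA hF hP _ w (v - w) hSM.
rewrite (addrC w) subrK zarantonello_residual_div // => incr_ge.
have cs : ip (Phi - w) (v - w) / delta <= hnorm ip (Phi - w) * hnorm ip (v - w) / delta.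
  by rewrite ler_wpM2r ?invr_ge0 ?(ltW delta_gt0) ?ip_le_hnormM.
have := young_le (hnorm ip (Phi - w)) (hnorm ip (v - w)) alpha_gt0 delta_gt0.
rewrite -ler_pdivlMl ?mulr_gt0 ?exprn_gt0 //; lra.
Qed.

Lemma inexact_zarantonello_decrease {L th q nxt} : cond_LIP ip Aop L -> 0 < th ->
  L th < delta^-1 -> Xl nxt -> 0 <= q <= 1 ->
  hnorm ip (Phi - nxt) <= q * hnorm ip (Phi - w) ->
  (forall t, 0 <= t <= 1 ->
     Num.max (hnorm ip (w + t *: (nxt - w))) (hnorm ip (t *: (nxt - w))) <= th) ->
  (delta^-1 - L th) * (1 - q) ^+ 2 * hnorm ip (Phi - w) ^+ 2 <= E w - E nxt.
Proof.
move=> hLIP th_gt0 L_lt Xl_nxt q01 err_le seg_le.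
have Xl_d : Xl (nxt - w) := fd_subspaceB hXl Xl_nxt Xl_w.
have := energy_incr_le hX hF hP _ _ w (nxt - w) hLIP th_gt0 seg_le.
rewrite (addrC w) subrK zarantonello_residual_div //.
set e0 := Phi - w; set e := Phi - nxt; set A := hnorm ip e0 ^+ 2.
have -> : nxt - w = e0 - e by rewrite /e0 /e opprB [RHS]addrC addrA subrK.
have e_ge0 : 0 <= hnorm ip e := sqrtr_ge0 _.
have a_le : ip e0 e <= q * A.
  apply: le_trans (ip_le_hnormM hX e0 e) _.
  by rewrite /A expr2 mulrCA ler_wpM2l ?sqrtr_ge0.
have B_le : ip e e <= q ^+ 2 * A.
  by rewrite -(hnorm_sqr hX) /A -exprMn ler_pXn2r ?nnegrE ?mulr_ge0 ?sqrtr_ge0 //;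
    case/andP: q01.
have ip_h : ip e0 (e0 - e) = A - ip e0 e by rewrite ipBr // /A (hnorm_sqr hX).
have h_sqr : hnorm ip (e0 - e) ^+ 2 = A - 2 * ip e0 e + ip e e.
  rewrite (hnorm_sqr hX) (ipBl hX e0 e) (ipBr hX e0 e e0) (ipBr hX e0 e e).
  by rewrite (ipC hX e e0) /A (hnorm_sqr hX); ring.
have := inexact_descent_le (A := A) (sqr_ge0 _) a_le B_le (hLIP th th_gt0).1 L_lt q01.
by rewrite ip_h h_sqr; lra.
Qed.

Lemma inexact_step_segment_le {alpha L tau q nxt} :
  cond_LIP ip Aop L -> 0 < tau -> alpha <= L (5 * tau) ->
  dual_norm ip (fun v => F v - Aop 0 v) <= alpha * tau -> hnorm ip w <= tau ->
  delta * L (5 * tau) < 1 -> 0 <= q <= 3^-1 ->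
  hnorm ip (Phi - nxt) <= q * hnorm ip (Phi - w) ->
  forall t, 0 <= t <= 1 ->
    Num.max (hnorm ip (w + t *: (nxt - w))) (hnorm ip (t *: (nxt - w))) <= 5 * tau.
Proof.
move=> hLIP tau_gt0 a_le5 dn_le w_le dL5_lt1 /andP[q_ge0 q_le] err_le.
have t5_gt0 : 0 < 5 * tau by rewrite mulr_gt0.
have L5_gt0 : 0 < L (5 * tau) := (hLIP _ t5_gt0).1.
have e0_le : hnorm ip (Phi - w) <= 2 * tau.
  have w_le5 : hnorm ip w <= 5 * tau by lra.
  apply: le_trans (zarantonello_step_le hLIP t5_gt0 w_le5) _.
  have : L (5 * tau) * hnorm ip w <= L (5 * tau) * tau by rewrite ler_wpM2l ?(ltW L5_gt0).
  have : alpha * tau <= L (5 * tau) * tau by rewrite ler_wpM2r ?(ltW tau_gt0).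
  move=> ? ?; apply: (@le_trans _ _ (delta * (2 * (L (5 * tau) * tau)))).
    by rewrite ler_wpM2l ?(ltW delta_gt0) //; lra.
  have : delta * L (5 * tau) * tau <= tau by rewrite ler_piMl ?(ltW tau_gt0) ?(ltW dL5_lt1).
  lra.
have h_le : hnorm ip (nxt - w) <= 8 / 3 * tau.
  have -> : nxt - w = (Phi - w) - (Phi - nxt) by rewrite opprB [RHS]addrC addrA subrK.
  apply: le_trans (ler_hnormB hX _ _) _.
  have : q * hnorm ip (Phi - w) <= 3^-1 * (2 * tau) by rewrite ler_pM ?sqrtr_ge0.
  lra.
move=> t /andP[t_ge0 t_le1]; rewrite ge_max (hnormZ hX) ger0_norm //.
have : t * hnorm ip (nxt - w) <= hnorm ip (nxt - w) by rewrite ler_piMl ?sqrtr_ge0.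
have := ler_hnormD hX w (t *: (nxt - w)); rewrite (hnormZ hX) ger0_norm // => ? ?.
by apply/andP; split; lra.
Qed.

Lemma inexact_zarantonello_contraction {alpha L tau qalg imin ustar nxt} :
  cond_SM ip Aop alpha -> cond_LIP ip Aop L -> (forall th, 0 < th -> alpha <= L th) ->
  0 < tau -> dual_norm ip (fun v => F v - Aop 0 v) / alpha <= tau ->
  hnorm ip w <= tau -> delta < (L (5 * tau))^-1 -> Xl ustar -> Xl nxt ->
  0 <= qalg ^+ imin <= 3^-1 -> hnorm ip (Phi - nxt) <= qalg ^+ imin * hnorm ip (Phi - w) ->
  (1 - qE2 L alpha qalg imin tau delta) * (E w - E ustar) <= E w - E nxt.
Proof.
move=> hSM hLIP a_le tau_gt0 M_le w_le d_lt Xl_us Xl_nxt q_range err_le.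
have [alpha_gt0 _] := hSM.
have dn_le : dual_norm ip (fun v => F v - Aop 0 v) <= alpha * tau.
  by rewrite mulrC -ler_pdivrMr.
have t5_gt0 : 0 < 5 * tau by rewrite mulr_gt0.
have a_le5 := a_le _ t5_gt0.
have a_le2 : alpha <= L (2 * tau) by apply: a_le; rewrite mulr_gt0.
have L5_gt0 := lt_le_trans alpha_gt0 a_le5.
have dL5_lt1 : delta * L (5 * tau) < 1 by rewrite -ltr_pdivlMr // mul1r.
have L5_lt : L (5 * tau) < delta^-1 by rewrite -[delta^-1]mul1r ltr_pdivlMr // mulrC.
have seg_le := inexact_step_segment_le hLIP tau_gt0 a_le5 dn_le w_le dL5_lt1 q_range err_le.
have q01 : 0 <= qalg ^+ imin <= 1 by case/andP: q_range => ? ?; apply/andP; split; lra.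
have decr := inexact_zarantonello_decrease hLIP t5_gt0 L5_lt Xl_nxt q01 err_le seg_le.
have gap := energy_gap_le_zarantonello_step hSM Xl_us.
have := gain_mul_gap_le (q := qalg ^+ imin) L5_lt (introT andP (conj alpha_gt0 a_le2))
  (sqr_ge0 _) gap.
rewrite /qE2; lra.
Qed.

End ZarantonelloStep.

Section LevelRun.
Context {R : realType} {X : lmodType R} {ip Aop : X -> X -> R} {F : X -> R}
  {Xl : set X} {qalg : R} {Psi : (X -> R) -> X -> X}.
Hypotheses (hX : is_hilbert ip) (hA : forall w, is_dual ip (Aop w))
  (hF : is_dual ip F) (hXl : is_fd_subspace Xl) (hsolver : is_alg_solver ip Xl qalg Psi).

Lemma alg_solver_iter {phi wstar w} : is_dual ip phi -> Xl wstar ->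
  (forall v, Xl v -> ip wstar v = phi v) -> Xl w ->
  forall i, Xl (iter i (Psi phi) w)
            /\ hnorm ip (wstar - iter i (Psi phi) w) <= qalg ^+ i * hnorm ip (wstar - w).
Proof.
move=> hphi Xl_ws hws Xl_w; have [qalg_gt0 [_ solver]] := hsolver.
elim=> [|i [Xl_i err_i]] /=; first by rewrite expr0 mul1r.
have [Xl_i1 err_i1] := solver _ hphi _ Xl_ws hws _ Xl_i.
split => //; apply: le_trans err_i1 _.
by rewrite exprS -mulrA ler_wpM2l // ltW.
Qed.

Lemma zar_rhs_dual delta w : is_dual ip (zar_rhs ip Aop F delta w).
Proof. exact: is_dualD (is_dual_ip hX w) (is_dualZ delta (is_dualB hF (hA w))). Qed.

Context {eta : X -> R} {lam_lin lam_alg delta : R} {imin : nat} {u0 : X}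
  {U : nat -> X} {ib : nat -> nat} {K : nat}.
Hypothesis run : ailfem_level_run ip Aop F Psi eta lam_lin lam_alg delta imin u0 U ib K.

Lemma level_run_step {j} : (j < K)%N -> Xl (U j) ->
  exists2 Phi, Xl Phi &
    [/\ forall v, Xl v -> ip Phi v = zar_rhs ip Aop F delta (U j) v, Xl (U j.+1)
      & hnorm ip (Phi - U j.+1) <= qalg ^+ imin * hnorm ip (Phi - U j)].
Proof.
move=> j_lt Xl_j; have [qalg_gt0 [qalg_lt1 _]] := hsolver.
have [Phi Xl_Phi hPhi] := riesz_fd_subspace hX hXl (zar_rhs_dual delta (U j)).1.
have := run.2 j.+1 erefl j_lt; rewrite /= => -[[_ [[_ imin_le] _]] ->].
have [Xl_nxt err_le] := alg_solver_iter (zar_rhs_dual delta (U j)) Xl_Phi hPhi Xl_j (ib j.+1).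
exists Phi => //; split => //; apply: le_trans err_le _.
by rewrite ler_wpM2r ?sqrtr_ge0 // ler_wiXn2l // ltW.
Qed.

Lemma level_run_in_subspace : Xl u0 -> forall j, (j <= K)%N -> Xl (U j).
Proof.
move=> Xl_u0; elim=> [_|j IH j_lt]; first by rewrite run.1.
by have [Phi _ [_ ? _]] := level_run_step j_lt (IH (ltnW j_lt)).
Qed.

End LevelRun.

Theorem lemma8 (R : realType) (X : lmodType R) (ip : X -> X -> R)
    (Aop : X -> X -> R) (F : X -> R) (P : X -> R) (alpha : R) (L : R -> R)
    (Xl : set X) (qalg : R) (Psi : (X -> R) -> X -> X) (eta : X -> R)
    (lam_lin lam_alg delta : R) (imin : nat) (u0 ustar : X)
    (U : nat -> X) (ib : nat -> nat) (k : nat) :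
  is_hilbert ip ->
  (forall w, is_dual ip (Aop w)) -> is_dual ip F -> Aop 0 <> F ->
  cond_SM ip Aop alpha -> cond_LIP ip Aop L -> cond_POT Aop P ->
  is_fd_subspace Xl ->
  Xl ustar -> (forall v, Xl v -> Aop ustar v = F v) ->
  is_alg_solver ip Xl qalg Psi ->
  (forall v, 0 <= eta v) ->
  0 < lam_lin -> 0 < lam_alg -> (1 <= imin)%N ->
  let M := dual_norm ip (fun v => F v - Aop 0 v) / alpha in
  Xl u0 -> hnorm ip u0 <= 2 * M ->
  ailfem_level_run ip Aop F Psi eta lam_lin lam_alg delta imin u0 U ib k.+1 ->
  (* k < kbar[l]: the k-loop has not terminated at steps 1..k *)
  (forall j, (1 <= j)%N -> (j <= k)%N -> ~ kloop_stop ip P F eta lam_lin M U j) ->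
  let tau := M + 3 * M * Num.sqrt (L (3 * M) / alpha) in
  hnorm ip (U k) <= tau ->
  qalg ^+ imin <= 3^-1 ->
  0 < delta -> delta < (L (5 * tau))^-1 -> delta < 2 * alpha / L (2 * tau) ^+ 2 ->
  let E := energy P F in
  let q2 := qE2 L alpha qalg imin tau delta in
  4 * M <= tau /\
  (0 <= E (U k.+1) - E ustar /\ E (U k.+1) - E ustar <= q2 * (E (U k) - E ustar)) /\
  (0 <= q2 /\ q2 < 1) /\
  (Num.sqrt (qE2 L alpha qalg imin tau d) @[d --> 0^'+] --> (1 : R)) /\
  ((1 - q2) * (E (U k) - E ustar) <= E (U k) - E (U k.+1)
   /\ E (U k) - E (U k.+1) <= E (U k) - E ustar).
Proof.
move=> hX hA hF A0_neq_F hSM hLIP hP hXl Xl_us galerkin hsolver _ _ _ _ M Xl_u0 _ run _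
  tau w_le q_le delta_gt0 d_lt _ E q2.
have [alpha_gt0 _] := hSM; have [qalg_gt0 _] := hsolver.
have [x0 x0_neq0 res_x0] := linear_functional_neq hF.1 (hA 0).1 A0_neq_F.
have a_le th : 0 < th -> alpha <= L th := SM_le_LIP hX alpha L x0 th hSM hLIP x0_neq0.
have M_gt0 : 0 < M by rewrite divr_gt0 // (dual_norm_gt0 hX (is_dualB hF (hA 0)) res_x0).
have tau_ge : 4 * M <= tau by apply: four_mul_le_tau; rewrite // alpha_gt0 a_le // mulr_gt0.
have Xl_U := level_run_in_subspace hX hA hF hXl hsolver run Xl_u0.
have [Phi Xl_Phi [hPhi Xl_nxt err_le]] :=
  level_run_step hX hA hF hXl hsolver run (ltnSn k) (Xl_U k (leqnSn k)).
have q_ge0 : 0 <= qalg ^+ imin by rewrite exprn_ge0 // ltW.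
have contr := inexact_zarantonello_contraction hX hA hF hP hXl delta_gt0
  (Xl_U k (leqnSn k)) Xl_Phi hPhi hSM hLIP a_le (_ : 0 < tau) (_ : M <= tau) w_le d_lt
  Xl_us Xl_nxt (introT andP (conj q_ge0 q_le)) err_le.
have /andP[q2_ge0 q2_lt1] : 0 <= q2 < 1.
  by apply: qE2_ge0_lt1; rewrite ?q_ge0 ?a_le ?mulr_gt0 //; lra.
have nxt_ge := energy_ge_discrete_solution hX hA hF hP _ ustar (U k.+1) hSM
  (galerkin _ (fd_subspaceB hXl Xl_nxt Xl_us)).
rewrite /q2 /E; split; first exact: tau_ge.
split; first by split; lra.
split; first by split.
split; first exact: qE2_sqrt_cvg1.
by split; lra.
Qed.
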